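(* Let $\sigma\in\mathcal S_d$. Then $\sigma\in\mathcal B$ if and only if there exists a probability vector $\mathbf p$ on $\mathcal I$ (entries $\ge0$ summing to $1$) such that $\chi_{\sigma_1}(\mathbf p)<\chi_{\sigma_2}(\mathbf p)<\dots<\chi_{\sigma_d}(\mathbf p)$.
   Context: Setting: $\mathcal I=\{1,\dots,N\}$, $f_i(x)=A_ix+t_i$ on $\mathbb R^d$ with $A_i=\mathrm{diag}(\lambda_i^{(1)},\dots,\lambda_i^{(d)})$, all $\lambda_i^{(n)}\in(0,1)$, $f_i([0,1]^d)\subset[0,1]^d$, no two maps agree on $[0,1]^d$, and for all $m\ne n$ there is $i$ with $\lambda_i^{(n)}\ne\lambda_i^{(m)}$. $\Sigma=\mathcal I^{\mathbb N}$. For $\mathbf i\in\Sigma$, $r>0$, $1\le n\le d$, $L_{\mathbf i}(r,n)$ is the unique integer with $\prod_{\ell=1}^{L_{\mathbf i}(r,n)}\lambda_{i_\ell}^{(n)}\le r<\prod_{\ell=1}^{L_{\mathbf i}(r,n)-1}\lambda_{i_\ell}^{(n)}$. For a permutation $\sigma=(\sigma_1,\dots,\sigma_d)$ of $\{1,\dots,d\}$, $\mathbf i$ determines a strictly $\sigma$-ordered cylinder at scale $r$ if, with $L=L_{\mathbf i}(r,\sigma_d)$, $\prod_{\ell=1}^L\lambda_{i_\ell}^{(\sigma_d)}<\prod_{\ell=1}^L\lambda_{i_\ell}^{(\sigma_{d-1})}<\dots<\prod_{\ell=1}^L\lambda_{i_\ell}^{(\sigma_1)}$. $\mathcal B$ is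 the set of $\sigma$ for which some $\mathbf i\in\Sigma$ and $r>0$ determine a strictly $\sigma$-ordered cylinder at scale $r$. Lyapunov exponent: $\chi_x(\mathbf p)=-\sum_{i\in\mathcal I}p(i)\log\lambda_i^{(x)}$ for a coordinate $x$. *)

From mathcomp Require Import all_boot all_order all_algebra all_fingroup.
From mathcomp Require Import all_classical all_reals exp.
Set Implicit Arguments. Unset Strict Implicit. Unset Printing Implicit Defensive.
Import Order.TTheory GRing.Theory Num.Theory.
Local Open Scope ring_scope.

Section Defs.
Variables (R : realType) (N d : nat).
(* lam i n = lambda_i^(n+1); translations t i n; coordinates 'I_d,
   maps 'I_N (0-indexed). *)
Variables (lam t : 'I_N -> 'I_d -> R).

Definition fmap (i : 'I_N) (x : 'I_d -> R) : 'I_d -> R :=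
  fun n => lam i n * x n + t i n.

Definition in_cube (x : 'I_d -> R) : Prop := forall n, 0 <= x n <= 1.

Definition diag_IFS_assumptions : Prop :=
  [/\ (forall i n, 0 < lam i n < 1),
      (forall i x, in_cube x -> in_cube (fmap i x)),
      (forall i j, i != j -> exists x, in_cube x /\ fmap i x <> fmap j x)
    & (forall m n : 'I_d, m != n -> exists i, lam i n != lam i m)].

(* Sigma = I^N : w l is the (l+1)-th letter i_{l+1} *)
Definition cylprod (w : nat -> 'I_N) (L : nat) (n : 'I_d) : R :=
  \prod_(l < L) lam (w l) n.

(* L = L_w(r,n): prod_{l<=L} <= r < prod_{l<=L-1}
   (L = 0 never qualifies since it would need 1 <= r < 1) *)
Definition is_Lscale (w : nat -> 'I_N) (r : R) (n : 'I_d) (L : nat) : Prop :=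
  cylprod w L n <= r /\ r < cylprod w L.-1 n.

(* w determines a strictly sigma-ordered cylinder at scale r;
   sigma_k (1-indexed) is s (k-1); sigma_d is s at index d-1 *)
Definition strictly_ordered (w : nat -> 'I_N) (r : R) (s : {perm 'I_d}) : Prop :=
  exists L : nat,
    (forall k : 'I_d, val k = d.-1 -> is_Lscale w r (s k) L) /\
    (forall j k : 'I_d, (j < k)%N -> cylprod w L (s k) < cylprod w L (s j)).

Definition in_B (s : {perm 'I_d}) : Prop :=
  exists (w : nat -> 'I_N) (r : R), 0 < r /\ strictly_ordered w r s.

Definition prob_vector (p : 'I_N -> R) : Prop :=
  (forall i, 0 <= p i) /\ \sum_i p i = 1.

Definition lyap (p : 'I_N -> R) (x : 'I_d) : R :=
  - \sum_i p i * ln (lam i x).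

End Defs.

(** For a word of length L whose letters occur with frequencies q, the log of
    its cylinder product in coordinate n is -L chi_n(q); so a strictly
    sigma-ordered cylinder orders the Lyapunov exponents of its empirical
    letter frequencies.  Conversely, the ordering of the exponents at p is a
    finite system of strict linear inequalities in p, which survives replacing
    p by the integer counts floor(M p) for M large; a word with these letter
    counts, cut at the scale of its own sigma_d-product, then determines a
    strictly sigma-ordered cylinder. *)

From mathcomp Require Import all_boot all_order all_algebra all_fingroup.
From mathcomp Require Import all_classical all_reals exp.
From mathcomp Require Import lra.
Import Order.TTheory GRing.Theory Num.Theory.
Local Open Scope ring_scope.
Set Implicit Arguments. Unset Strict Implicit. Unset Printing Implicit Defensive.

Section Words.
Variables (R : realType) (N : nat).

Lemma sum_indicator_mulr (j : 'I_N) (f : 'I_N -> R) :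
  \sum_i (j == i)%:R * f i = f j.
Proof.
rewrite (bigD1 j) //= eqxx mul1r big1 ?addr0 // => i.
by rewrite eq_sym => /negbTE ->; rewrite mul0r.
Qed.

Definition letter_count (w : nat -> 'I_N) (L : nat) (i : 'I_N) : R :=
  \sum_(l < L) (w l == i)%:R.

Lemma sum_letter_count w L : \sum_i letter_count w L i = L%:R.
Proof.
rewrite /letter_count exchange_big /= -[L in RHS]card_ord -sumr_const.
apply: eq_bigr => l _.
by under eq_bigr do rewrite -[_%:R]mulr1; rewrite sum_indicator_mulr.
Qed.

Lemma word_with_counts (c : 'I_N -> nat) : (0 < \sum_i c i)%N ->
  exists w : nat -> 'I_N, forall i, letter_count w (\sum_i c i)%N i = (c i)%:R.
Proof.
rewrite lt0n sum_nat_eq0 negb_forall => /existsP [j _].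
pose s := flatten [seq nseq (c i) i | i <- enum 'I_N].
have size_s : size s = (\sum_i c i)%N.
  rewrite size_flatten /shape -map_comp sumnE big_map big_enum /=.
  by apply: eq_bigr => i _; rewrite size_nseq.
exists (nth j s) => i; rewrite /letter_count -size_s.
rewrite -(big_mkord xpredT (fun l => ((nth j s l == i)%:R : R))).
rewrite -(big_nth j xpredT (fun x => ((x == i)%:R : R))) -natr_sum.
have count_s : count_mem i s = c i.
  rewrite count_flatten -map_comp sumnE big_map big_enum /= (bigD1 i) //=.
  rewrite count_nseq /= eqxx mul1n big1 ?addn0 // => k.
  by rewrite count_nseq /= => /negbTE ->.
rewrite -count_s -sum1_count [in RHS]big_mkcond /=.
by congr _%:R; apply: eq_bigr => x _; case: (x == i).
Qed.

Definition letter_freq (w : nat -> 'I_N) (L : nat) (i : 'I_N) : R :=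
  letter_count w L i / L%:R.

Lemma letter_freq_prob_vector w L : (0 < L)%N -> prob_vector (letter_freq w L).
Proof.
move=> L_gt0; split=> [i|].
  by rewrite divr_ge0 ?sumr_ge0.
by rewrite -mulr_suml sum_letter_count divff // pnatr_eq0 -lt0n.
Qed.

End Words.

Section Approximation.
Variables (R : realType) (N : nat).

Lemma sum_truncn_scale_ge (M : nat) (p a : 'I_N -> R) : (forall i, 0 <= p i) ->
  M%:R * \sum_i p i * a i - \sum_i `|a i|
    <= \sum_i (Num.truncn (M%:R * p i))%:R * a i.
Proof.
move=> p_ge0; rewrite mulr_sumr -sumrB; apply: ler_sum => i _.
have lo : (Num.truncn (M%:R * p i))%:R <= M%:R * p i.
  by rewrite truncn_le mulr_ge0.
have hi : M%:R * p i < (Num.truncn (M%:R * p i))%:R + 1.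
  by rewrite natr1 truncnS_gt.
have := p_ge0 i.
by case: (leP 0 (a i)) => a_sgn; [rewrite ger0_norm | rewrite ltr0_norm]; nra.
Qed.

Lemma nat_weights_of_prob_vector (K : finType) (P : pred K) (a : K -> 'I_N -> R)
    (p : 'I_N -> R) :
  prob_vector p -> (forall k, P k -> 0 < \sum_i p i * a k i) ->
  exists c : 'I_N -> nat,
    (0 < \sum_i c i)%N /\ forall k, P k -> 0 < \sum_i (c i)%:R * a k i.
Proof.
move=> [p_ge0 sum_p1] a_pos.
(* M dominates every ratio (sum_i |a k i|) / (sum_i p i * a k i), and also N so
   that the counts cannot all vanish. *)
pose B := \sum_(k | P k) `|(\sum_i `|a k i|) / \sum_i p i * a k i|.
pose M := ((Num.truncn B).+1 + N)%N.
have B_lt_M : B < M%:R.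
  by rewrite natrD ltr_wpDr ?ler0n ?truncnS_gt.
exists (fun i => Num.truncn (M%:R * p i)); split.
  have := sum_truncn_scale_ge M (fun=> 1) p_ge0.
  rewrite -!mulr_suml !mulr1 sum_p1 normr1 sumr_const card_ord -natr_sum.
  rewrite /M natrD -natr1 -(ltr0n R); have := ler0n R (Num.truncn B); lra.
move=> k Pk; have g_pos := a_pos k Pk.
apply: lt_le_trans (sum_truncn_scale_ge M (a k) p_ge0); rewrite subr_gt0.
rewrite -ltr_pdivrMr //; apply: le_lt_trans (ler_norm _) (le_lt_trans _ B_lt_M).
rewrite /B (bigD1 k) //= lerDl; apply: sumr_ge0 => *; exact: normr_ge0.
Qed.

End Approximation.

Section Cylinders.
Variables (R : realType) (N d : nat) (lam : 'I_N -> 'I_d -> R).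

Lemma is_Lscale_gt0 w r n L : is_Lscale lam w r n L -> (0 < L)%N.
Proof.
case: L => // -[]; rewrite /cylprod big_ord0 => /le_lt_trans/[apply].
by rewrite ltxx.
Qed.

Lemma lyap_ltE p x y :
  (lyap lam p x < lyap lam p y) = (0 < \sum_i p i * (ln (lam i x) - ln (lam i y))).
Proof.
rewrite -subr_gt0 /lyap opprK addrC -sumrB.
by under eq_bigr do rewrite -mulrBr.
Qed.

Hypothesis lam_gt0 : forall i n, 0 < lam i n.

Lemma cylprod_gt0 w L n : 0 < cylprod lam w L n.
Proof. exact: prodr_gt0. Qed.

Lemma ln_cylprod w L n :
  ln (cylprod lam w L n) = \sum_i letter_count R w L i * ln (lam i n).
Proof.
elim: L => [|L IH].
  rewrite /cylprod big_ord0 ln1 big1 // => i _.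
  by rewrite /letter_count big_ord0 mul0r.
rewrite /cylprod big_ord_recr /= lnM ?posrE ?cylprod_gt0 //.
rewrite -/(cylprod lam w L n) IH.
under [RHS]eq_bigr do rewrite /letter_count big_ord_recr mulrDl.
by rewrite big_split /= sum_indicator_mulr.
Qed.

Lemma cylprod_ltE w L x y :
  (cylprod lam w L y < cylprod lam w L x)
    = (0 < \sum_i letter_count R w L i * (ln (lam i x) - ln (lam i y))).
Proof.
rewrite -ltr_ln ?posrE ?cylprod_gt0 // -subr_gt0 !ln_cylprod -sumrB.
by under eq_bigr do rewrite -mulrBr.
Qed.

Lemma lyap_letter_freq_ltE w L x y : (0 < L)%N ->
  (lyap lam (letter_freq R w L) x < lyap lam (letter_freq R w L) y)
    = (cylprod lam w L y < cylprod lam w L x).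
Proof.
move=> L_gt0; rewrite lyap_ltE cylprod_ltE.
under eq_bigr do rewrite mulrAC.
by rewrite -mulr_suml pmulr_lgt0 // invr_gt0 ltr0n.
Qed.

Lemma is_Lscale_cylprod w L n : (forall i n, lam i n < 1) -> (0 < L)%N ->
  is_Lscale lam w (cylprod lam w L n) n L.
Proof.
move=> lam_lt1; case: L => // L _; split=> //.
by rewrite /cylprod big_ord_recr /= gtr_pMr ?lam_lt1 ?cylprod_gt0.
Qed.

End Cylinders.

Theorem lemma3p1 (R : realType) (N d : nat) (lam t : 'I_N -> 'I_d -> R)
    (hd : (0 < d)%N) (hIFS : diag_IFS_assumptions lam t) (s : {perm 'I_d}) :
  in_B lam s <->
  exists p : 'I_N -> R, prob_vector p /\
    (forall j k : 'I_d, (j < k)%N -> lyap lam p (s j) < lyap lam p (s k)).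
Proof.
case: hIFS => lam_bounds _ _ _.
have lam_gt0 i n : 0 < lam i n by case/andP: (lam_bounds i n).
have lam_lt1 i n : lam i n < 1 by case/andP: (lam_bounds i n).
have last_lt_d : (d.-1 < d)%N by rewrite prednK.
pose last_coord := Ordinal last_lt_d.
split=> [[w [r [_ [L [scale ordered]]]]] | [p [p_prob lyap_lt]]].
  have L_gt0 : (0 < L)%N := is_Lscale_gt0 (scale last_coord erefl).
  exists (letter_freq R w L); split; first exact: letter_freq_prob_vector.
  by move=> j k jk; rewrite lyap_letter_freq_ltE // ordered.
pose a (jk : 'I_d * 'I_d) i := ln (lam i (s jk.1)) - ln (lam i (s jk.2)).
pose ordered_pair (jk : 'I_d * 'I_d) := (jk.1 < jk.2)%N.
have [|c [c_gt0 c_pos]] := nat_weights_of_prob_vector (P := ordered_pair) (a := a) p_prob.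
  by move=> [j k] /= jk; rewrite -lyap_ltE lyap_lt.
have [w w_counts] := word_with_counts R c_gt0.
set L := (\sum_i c i)%N in w_counts.
exists w, (cylprod lam w L (s last_coord)); split; first exact: cylprod_gt0.
exists L; split=> [k k_last | j k jk].
  have -> : k = last_coord by apply: val_inj.
  exact: is_Lscale_cylprod.
rewrite cylprod_ltE //; under eq_bigr do rewrite w_counts.
exact: (c_pos (j, k)).
Qed.
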